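(* Let $\mathcal{A}$ be the cluster algebra of a seed pattern $t\mapsto(\mathbf{x}_t,B_t)$ on $\mathbb{T}_n$, and let $s\overset{k}{-}s'$ be an edge of $\mathbb{T}_n$. If $U\subseteq[\mathbf{x}_s]$ and $U\not\subseteq[\mathbf{x}_{s'}]$, then the Bongartz completion of $U$ with respect to $s'$ is $B_U(s')=[\mathbf{x}_s]$.
   Context: $\mathcal{F}=\mathbb{Q}(x_1,\dots,x_n)$. A labeled seed is a pair $(\mathbf{x},B)$ with $\mathbf{x}=(x_1,\dots,x_n)$ a free generating set of $\mathcal{F}$ and $B=(b_{ij})$ a skew-symmetrizable $n\times n$ integer matrix. Mutation $\mu_k$ gives $(\mathbf{x}',B')$ with $b'_{ij}=-b_{ij}$ if $i=k$ or $j=k$, and $b'_{ij}=b_{ij}+[b_{ik}]_+b_{kj}+b_{ik}[-b_{kj}]_+$ otherwise ($[b]_+=\max(b,0)$); $x'_j=x_j$ for $j\ne k$ and $x'_k=\big(\prod_i x_i^{[b_{ik}]_+}+\prod_i x_i^{[-b_{ik}]_+}\big)/x_k$. $\mathbb{T}_n$ is the $n$-regular tree with edges labeled $1,\dots,n$, the $n$ edges at each vertex having distinct labels; $t\overset{k}{-}t'$ denotes an edge labeled $k$. A seed pattern assigns a labeled seed $(\mathbf{x}_t,B_t)$, $\mathbf{x}_t=(x_{1;t},\dots,x_{n;t})$, $B_t=(b_{ij;t})$, to each $t\in\mathbb{T}_n$ such that seeds at the ends of an edge labeled $k$ are related by $\mu_k$; $\mathcal{A}$ is the $\mathbb{Q}$-algebra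 generated by all cluster variables. The non-labelled cluster is $[\mathbf{x}_t]=\{x_{1;t},\dots,x_{n;t}\}$. For a vertex $r$, the $c$-vectors $\mathbf{c}^{B_r;r}_{j;t}\in\mathbb{Z}^n$ are defined by $\mathbf{c}^{B_r;r}_{j;r}=\mathbf{e}_j$ and, for each edge $t\overset{k}{-}t'$: $\mathbf{c}^{B_r;r}_{k;t'}=-\mathbf{c}^{B_r;r}_{k;t}$ and $\mathbf{c}^{B_r;r}_{j;t'}=\mathbf{c}^{B_r;r}_{j;t}+[b_{kj;t}]_+\mathbf{c}^{B_r;r}_{k;t}+b_{kj;t}[-\mathbf{c}^{B_r;r}_{k;t}]_+$ for $j\ne k$ ($[\cdot]_+$ applied entrywise). For $U$ a subset of some non-labelled cluster and a vertex $r$, a Bongartz completion of $U$ with respect to $r$ is a non-labelled cluster $[\mathbf{x}_t]$ with $U\subseteq[\mathbf{x}_t]$ and $\mathbf{c}^{B_r;r}_{i;t}$ non-negative for every $i$ with $x_{i;t}\notin U$; it is known (Cao–Gyoda–Yurikusa) that it exists and is unique, and it is denoted $B_U(r)$. *)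

From HB Require Import structures.
From mathcomp Require Import all_boot all_order all_algebra.
From mathcomp Require Import fraction.
From mathcomp Require Import mpoly.
Set Implicit Arguments. Unset Strict Implicit. Unset Printing Implicit Defensive.
Import Order.TTheory GRing.Theory Num.Theory.
Local Open Scope ring_scope.

Definition ambient (n : nat) : fieldType := {fraction {mpoly rat[n]}}.

Definition gen (n : nat) (i : 'I_n) : ambient n := (tofrac ('X_i : {mpoly rat[n]})).

Definition pos (b : int) : int := Num.max b 0.

(* Vertices: reduced words over 'I_n (no two consecutive equal letters);
   the neighbour of w along the edge labelled k is w with its last letter
   removed if that letter is k, and  w ++ [k]  otherwise. *)
Definition reducedw (n : nat) (w : seq 'I_n) : bool := sorted (fun a b => a != b) w.

Definition stepw (n : nat) (w : seq 'I_n) (k : 'I_n) : seq 'I_n :=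
  if w is a :: w' then (if last a w' == k then belast a w' else rcons w k)
  else [:: k].

Lemma stepw_reduced (n : nat) (w : seq 'I_n) (k : 'I_n) :
  reducedw w -> reducedw (stepw w k).
Proof.
case: w => [|a w] //= Hw.
case: eqP => Hk.
  move: Hw; rewrite /reducedw -/(sorted _ (a :: w)) lastI.
  case: (belast a w) => [|b s] //=.
  by rewrite rcons_path => /andP[].
rewrite /reducedw /= rcons_path Hw /=.
by apply/eqP.
Qed.

Definition vertex (n : nat) := {w : seq 'I_n | reducedw w}.

Definition step (n : nat) (t : vertex n) (k : 'I_n) : vertex n :=
  exist _ (stepw (proj1_sig t) k) (stepw_reduced k (proj2_sig t)).

Definition edge (n : nat) (t : vertex n) (k : 'I_n) (t' : vertex n) : Prop :=
  t' = step t k.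

Definition skew_symmetrizable (n : nat) (B : 'M[int]_n) : Prop :=
  exists d : 'I_n -> int, (forall i, 0 < d i) /\
    (forall i j, d i * B i j = - (d j * B j i)).

(* x is a free generating set of F over Q: the Q-algebra map
   Q(x_1..x_n) -> F sending x_i to x i is an isomorphism. (Ring morphisms
   between fields of characteristic 0 are automatically Q-linear.) *)
Definition free_generating (n : nat) (x : 'I_n -> ambient n) : Prop :=
  exists f : {rmorphism ambient n -> ambient n},
    bijective f /\ forall i, f (gen i) = x i.

Definition labeled_seed (n : nat) (x : 'I_n -> ambient n) (B : 'M[int]_n) : Prop :=
  free_generating x /\ skew_symmetrizable B.

Definition mut_matrix (n : nat) (k : 'I_n) (B : 'M[int]_n) : 'M[int]_n :=
  \matrix_(i, j)
    (if (i == k) || (j == k) then - B i j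
     else B i j + pos (B i k) * B k j + B i k * pos (- B k j)).

Definition mut_cluster (n : nat) (k : 'I_n) (x : 'I_n -> ambient n) (B : 'M[int]_n)
  : 'I_n -> ambient n :=
  fun j => if j == k then
    ((\prod_i x i ^ pos (B i k)) + (\prod_i x i ^ pos (- B i k))) / x k
  else x j.

Definition seed_pattern (n : nat) (x : vertex n -> 'I_n -> ambient n)
  (B : vertex n -> 'M[int]_n) : Prop :=
  (forall t, labeled_seed (x t) (B t)) /\
  (forall t k t', edge t k t' ->
     x t' = mut_cluster k (x t) (B t) /\ B t' = mut_matrix k (B t)).

Definition cluster (n : nat) (x : vertex n -> 'I_n -> ambient n) (t : vertex n)
  : ambient n -> Prop := fun y => exists i, y = x t i.

Definition posv (n : nat) (c : 'rV[int]_n) : 'rV[int]_n := map_mx pos c.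

Definition cstep (n : nat) (Bt : 'M[int]_n) (k : 'I_n) (c : 'I_n -> 'rV[int]_n)
  : 'I_n -> 'rV[int]_n :=
  fun j => if j == k then - c k
           else c j + pos (Bt k j) *: c k + Bt k j *: posv (- c k).

Fixpoint cwalk (n : nat) (B : vertex n -> 'M[int]_n) (v : vertex n)
  (c : 'I_n -> 'rV[int]_n) (ks : seq 'I_n) : 'I_n -> 'rV[int]_n :=
  if ks is k :: ks' then cwalk B (step v k) (cstep (B v) k c) ks' else c.

(* c^{B_r;r}_{j;t}: computed along the walk from r to t that first goes from
   r down to the root [::] (labels rev r) and then up to t (labels t).
   Since the recursion is an involution along each edge, this agrees with
   the value along any walk, in particular the unique path from r to t. *)
Definition cvec (n : nat) (B : vertex n -> 'M[int]_n) (r t : vertex n) (j : 'I_n)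
  : 'rV[int]_n :=
  cwalk B r (fun i => delta_mx 0 i) (rev (proj1_sig r) ++ proj1_sig t) j.

Definition bongartz_completion (n : nat) (x : vertex n -> 'I_n -> ambient n)
  (B : vertex n -> 'M[int]_n) (U : ambient n -> Prop) (r : vertex n)
  (C : ambient n -> Prop) : Prop :=
  exists t : vertex n,
    (forall y, C y <-> cluster x t y) /\
    (forall u, U u -> cluster x t u) /\
    (forall i, ~ U (x t i) -> forall j, 0 <= cvec B r t i 0 j).

From HB Require Import structures.
From mathcomp Require Import all_boot all_order all_algebra.
From mathcomp Require Import zify ring.
From Stdlib Require Import FunctionalExtensionality Classical.
Set Implicit Arguments. Unset Strict Implicit. Unset Printing Implicit Defensive.
Import Order.TTheory GRing.Theory Num.Theory.
Local Open Scope ring_scope.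

(* Every cluster variable of s other than x_{s;k} survives the mutation to s',
   so U must contain x_{s;k}; it remains to see that the c-vectors
   c^{B_{s'};s'}_{i;s}, i <> k, are nonnegative.  They arise from the standard
   basis by a single c-vector step at k, which turns e_i into
   e_i + [b_{ki;s'}]_+ e_k because e_k has no negative entry.  The only work is
   to see that the definition of cvec, which walks from s' down to the root and
   back up to s, agrees with this one step: the c-vector step along an edge is
   an involution (exchange matrices mutate with it), so backtracking cancels. *)

Lemma pos_ge0 (b : int) : 0 <= pos b.
Proof. rewrite /pos; lia. Qed.

Lemma pos_opp (b : int) : pos (- b) = pos b - b.
Proof. rewrite /pos; lia. Qed.

Lemma pos_eq0 (b : int) : b <= 0 -> pos b = 0.
Proof. rewrite /pos; lia. Qed.

Section RegularTree.
Variable n : nat.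
Implicit Types (p : seq 'I_n) (k : 'I_n) (v : vertex n).

Lemma stepw_rcons p k : stepw (rcons p k) k = p.
Proof.
case: p => [|a p] /=; first by rewrite eqxx.
by rewrite last_rcons eqxx belast_rcons.
Qed.

Lemma step_rcons v k :
  val (step v k) = rcons (val v) k \/ val v = rcons (val (step v k)) k.
Proof.
rewrite /=; case: (val v) => [|a w] /=; first by left.
by case: eqP => [<-|_]; [right; rewrite lastI | left].
Qed.

Lemma stepK k : involutive ((@step n)^~ k).
Proof.
move=> v; apply: val_inj; case: (step_rcons v k) => [/= -> | Ev].
  exact: stepw_rcons.
rewrite [in RHS]Ev; move: (svalP v); rewrite Ev.
rewrite -[val (step (step v k) k)]/(stepw (val (step v k)) k).
case: (val (step v k)) => [|a w] //= Hr.
suff /negbTE -> : last a w != k by rewrite -rcons_cons.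
by move: Hr; rewrite /reducedw /= rcons_path => /andP[].
Qed.

Lemma walk_rev_cat v p : foldl (@step n) v (rev p ++ p) = v.
Proof.
elim/last_ind: p v => [|p a IH] v //.
by rewrite rev_rcons -cats1 catA /= foldl_cat IH /= stepK.
Qed.

End RegularTree.

Section CVectors.
Variables (n : nat) (B : vertex n -> 'M[int]_n).
Implicit Types (p : seq 'I_n) (k : 'I_n) (v : vertex n) (c : 'I_n -> 'rV[int]_n).

Lemma cwalk_cat v c p1 p2 :
  cwalk B v c (p1 ++ p2) = cwalk B (foldl (@step n) v p1) (cwalk B v c p1) p2.
Proof. by elim: p1 v c => [|k p IH] v c //=; rewrite IH. Qed.

Lemma cstepK (M : 'M[int]_n) k : cancel (cstep M k) (cstep (mut_matrix k M) k).
Proof.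
move=> c; apply: functional_extensionality => j.
rewrite /cstep eqxx opprK; case: (eqVneq j k) => [-> //|_].
apply/matrixP => i l; rewrite /mut_matrix !mxE eqxx /= !pos_opp; ring.
Qed.

Lemma cstep_ge0 (M : 'M[int]_n) k c j :
  j != k -> (forall l, 0 <= c k 0 l) -> (forall l, 0 <= c j 0 l) ->
  forall l, 0 <= cstep M k c j 0 l.
Proof.
move=> /negbTE jk ck_ge0 cj_ge0 l.
rewrite /cstep jk !mxE [pos (- _)]pos_eq0 ?oppr_le0 // mulr0 addr0.
by rewrite addr_ge0 // mulr_ge0 // pos_ge0.
Qed.

Hypothesis B_step : forall v k, B (step v k) = mut_matrix k (B v).

Lemma cwalk_rev_cat v c p : cwalk B v c (rev p ++ p) = c.
Proof.
elim/last_ind: p v c => [|p a IH] v c //.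
rewrite rev_rcons -cats1 catA /= cwalk_cat walk_rev_cat IH /=.
by rewrite B_step cstepK.
Qed.

Lemma cvec_step s k :
  cvec B (step s k) s = cstep (B (step s k)) k (fun i => delta_mx 0 i).
Proof.
rewrite /cvec; case: (step_rcons s k) => ->.
  by rewrite rev_rcons /= stepK cwalk_rev_cat.
by rewrite -cats1 catA cwalk_cat walk_rev_cat cwalk_rev_cat.
Qed.

End CVectors.

Lemma delta_mx_ge0 (n : nat) (i l : 'I_n) :
  (0 : int) <= delta_mx (0 : 'I_1) i 0 l.
Proof. by rewrite mxE; case: (_ && _). Qed.

Section SeedPattern.
Variables (n : nat) (x : vertex n -> 'I_n -> ambient n) (B : vertex n -> 'M[int]_n).
Hypothesis x_B_pattern : seed_pattern x B.

Lemma seed_pattern_mut_matrix v k : B (step v k) = mut_matrix k (B v).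
Proof. by have [_ /(_ v k _ erefl) []] := x_B_pattern. Qed.

Lemma cluster_mutation_subset s k s' (U : ambient n -> Prop) :
  edge s k s' -> (forall u, U u -> cluster x s u) -> ~ U (x s k) ->
  forall u, U u -> cluster x s' u.
Proof.
move=> ss' HUs HUk u Uu; have [j Euj] := HUs u Uu; subst u.
have [_ /(_ _ _ _ ss') [xs' _]] := x_B_pattern.
case: (eqVneq j k) => [jk | /negbTE jk]; first by rewrite jk in Uu.
by exists j; rewrite xs' /mut_cluster jk.
Qed.

End SeedPattern.

Theorem lemma3p9 (n : nat) (x : vertex n -> 'I_n -> ambient n)
  (B : vertex n -> 'M[int]_n) (s s' : vertex n) (k : 'I_n)
  (U : ambient n -> Prop) :
  seed_pattern x B ->
  edge s k s' ->
  (forall u, U u -> cluster x s u) ->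
  ~ (forall u, U u -> cluster x s' u) ->
  bongartz_completion x B U s' (cluster x s).
Proof.
move=> Hxb ss' HUs HUs'.
have Uk : U (x s k).
  by apply: NNPP => /(cluster_mutation_subset Hxb ss' HUs).
exists s; split=> //; split=> // i HUi.
have ik : i != k by apply/eqP => Eik; rewrite Eik in HUi.
rewrite ss' cvec_step; last exact: seed_pattern_mut_matrix Hxb.
by apply: cstep_ge0 => // l; apply: delta_mx_ge0.
Qed.
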